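(* Fix $N\ge 3$. For $(p_0,p_1,p_3)\in(0,1)^3$ let $\mu_B:=\mu(p_0,p_1,p_1,p_3)$ and $\mu_C:=\mu\big((1/2+p_0)/2,(1/2+p_1)/2,(1/2+p_1)/2,(1/2+p_3)/2\big)$, with $\mu$ as defined in the context. Call $(p_0,p_1,p_3)$ a point of the Parrondo region if $\mu_B\le 0$ and $\mu_C>0$, and a point of the anti-Parrondo region if $\mu_B\ge 0$ and $\mu_C<0$. With $q_m:=1-p_m$ for $m=0,1,3$, the vector $(p_0,p_1,p_3)$ belongs to the Parrondo region if and only if $(q_3,q_1,q_0)$ belongs to the anti-Parrondo region. In particular, the Parrondo region and the anti-Parrondo region have the same (Lebesgue) volume.
   Context: Model: $N\ge 3$ players labeled $1,\ldots,N$ sit in a circle (indices mod $N$). The state space is $\Sigma=\{0,1\}^N$, with $x_i=1$ meaning player $i$ won his most recent game. For $\bm x\in\Sigma$ let $m_i(\bm x):=2x_{i-1}+x_{i+1}$ and let $\bm x^i$ be $\bm x$ with the $i$th coordinate flipped. Given $r_0,r_1,r_2,r_3\in(0,1)$ (with $s_m:=1-r_m$), each turn a uniformly random player $i$ tosses a coin with heads probability $r_{m_i(\bm x)}$, winning one unit on heads (status becomes $1$) and losing one unit on tails (status becomes $0$). This gives the irreducible aperiodic Markov chain on $\Sigma$ with $P(\bm x,\bm x^i)=N^{-1}r_{m_i(\bm x)}$ if $x_i=0$, $=N^{-1}s_{m_i(\bm x)}$ if $x_i=1$, and $P(\bm x,\bm x)=N^{-1}\big(\sum_{i:x_i=0}s_{m_i(\bm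 x)}+\sum_{i:x_i=1}r_{m_i(\bm x)}\big)$; let $\bm\pi$ be its stationary distribution and define the mean profit per turn $$\mu(r_0,r_1,r_2,r_3):=\sum_{\bm x\in\Sigma}\pi(\bm x)\sum_{i=1}^N N^{-1}\big[r_{m_i(\bm x)}-s_{m_i(\bm x)}\big],$$ the almost-sure limit of $S_n/n$ for the ensemble's cumulative profit $S_n$. Game $A$ uses a fair coin ($p=1/2$) for every player; game $B$ uses $(p_0,p_1,p_1,p_3)$; game $C=\tfrac12(A+B)$ (a fair coin toss decides which game is played each turn) therefore corresponds to parameters $r_m=(1/2+p_m)/2$. *)

From HB Require Import structures.
From mathcomp Require Import all_boot all_order all_algebra.
From mathcomp Require Import boolp classical_sets.
Set Implicit Arguments. Unset Strict Implicit. Unset Printing Implicit Defensive.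
Import Order.TTheory GRing.Theory Num.Theory.
Local Open Scope ring_scope.

Section Model.
Variables (R : realFieldType) (N : nat).

(* states: x : 'I_N -> bool, x i = true means player i won his last game *)
Definition state := {ffun 'I_N -> bool}.

Definition mi (x : state) (i : 'I_N) : nat :=
  (2 * x (ord_pred i) + x (ordS i))%N.

Definition flip (x : state) (i : 'I_N) : state :=
  [ffun j => if j == i then ~~ x i else x j].

Definition rr (r0 r1 r2 r3 : R) (m : nat) : R :=
  match m with 0 => r0 | 1 => r1 | 2 => r2 | _ => r3 end.

(* transition probability: a uniformly random player i is chosen; he wins
   (status 1) w.p. r_{m_i(x)} and loses (status 0) w.p. s_{m_i(x)} = 1 - r_{m_i(x)} *)
Definition trans (r0 r1 r2 r3 : R) (x y : state) : R :=
  (N%:R)^-1 * \sum_(i < N)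
    (let r := rr r0 r1 r2 r3 (mi x i) in
     ((y == flip x i)%:R * (if x i then 1 - r else r)
      + (y == x)%:R * (if x i then r else 1 - r))).

Definition stationary (r0 r1 r2 r3 : R) (pi : {ffun state -> R}) : Prop :=
  (forall x, 0 <= pi x) /\ \sum_x pi x = 1 /\
  forall y, \sum_x pi x * trans r0 r1 r2 r3 x y = pi y.

(* the stationary distribution (unique, the chain being irreducible) *)
Definition statdist (r0 r1 r2 r3 : R) : {ffun state -> R} :=
  xget [ffun => 0] [set pi | stationary r0 r1 r2 r3 pi].

Definition mu (r0 r1 r2 r3 : R) : R :=
  \sum_x statdist r0 r1 r2 r3 x *
    \sum_(i < N) (N%:R)^-1 *
      (rr r0 r1 r2 r3 (mi x i) - (1 - rr r0 r1 r2 r3 (mi x i))).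

Definition muB (p0 p1 p3 : R) : R := mu p0 p1 p1 p3.
Definition muC (p0 p1 p3 : R) : R :=
  mu ((2^-1 + p0) / 2) ((2^-1 + p1) / 2) ((2^-1 + p1) / 2) ((2^-1 + p3) / 2).

Definition parrondo (p0 p1 p3 : R) : Prop :=
  muB p0 p1 p3 <= 0 /\ 0 < muC p0 p1 p3.
Definition anti_parrondo (p0 p1 p3 : R) : Prop :=
  0 <= muB p0 p1 p3 /\ muC p0 p1 p3 < 0.

End Model.

From HB Require Import structures.
From mathcomp Require Import all_boot all_order all_algebra.
From mathcomp Require Import boolp classical_sets.
From mathcomp Require Import ring lra.
Set Implicit Arguments. Unset Strict Implicit. Unset Printing Implicit Defensive.
Import Order.TTheory GRing.Theory Num.Theory.
Local Open Scope ring_scope.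

(* Relabelling every player's status, x |-> ~~ x, turns m_i(x) = 2 x_{i-1} + x_{i+1}
   into 3 - m_i(x) and exchanges wins and losses.  Hence it conjugates the chain with
   parameters (r_0, r_1, r_2, r_3) to the chain with parameters
   (1 - r_3, 1 - r_2, 1 - r_1, 1 - r_0), maps the stationary distribution of one onto
   that of the other (the chains are irreducible, so these are unique) and reverses
   the sign of the mean profit.  The parameter map sends game B with (p_0, p_1, p_3)
   to game B with (q_3, q_1, q_0) and commutes with averaging against the fair game A,
   so it exchanges the signs of mu_B and of mu_C at once. *)

Definition irreducible (R : numDomainType) (T : finType) (P : T -> T -> R) :=
  forall Z : pred T, (forall x y, Z y -> 0 < P x y -> Z x) -> forall y x, Z y -> Z x.

Section StationaryUniqueness.
Variables (R : realDomainType) (T : finType) (P : T -> T -> R).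
Hypothesis P_ge0 : forall x y, 0 <= P x y.
Hypothesis P_row : forall x, \sum_y P x y = 1.
Hypothesis P_irr : irreducible P.

Definition stationary_vec (v : T -> R) := forall y, \sum_x v x * P x y = v y.

Lemma stationary_vecD v w : stationary_vec v -> stationary_vec w ->
  stationary_vec (fun x => v x + w x).
Proof.
move=> hv hw y; under eq_bigr => x _ do rewrite mulrDl.
by rewrite big_split /= hv hw.
Qed.

Lemma stationary_vecN v : stationary_vec v -> stationary_vec (fun x => - v x).
Proof.
by move=> hv y; under eq_bigr => x _ do rewrite mulNr; rewrite sumrN hv.
Qed.

(* Triangle inequality gives [|v| <= |v| P] pointwise, and both sides have the same
   total mass because the rows of P sum to 1. *)
Lemma stationary_vec_norm v : stationary_vec v -> stationary_vec (fun x => `|v x|).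
Proof.
move=> hv.
have le_norm y : `|v y| <= \sum_x `|v x| * P x y.
  rewrite -{1}hv; apply: le_trans (ler_norm_sum _ _ _) _.
  by apply: ler_sum => x _; rewrite normrM (ger0_norm (P_ge0 _ _)).
have sum_gap : \sum_y (\sum_x `|v x| * P x y - `|v y|) = 0.
  rewrite sumrB exchange_big /=.
  by under eq_bigr => x _ do rewrite -mulr_sumr P_row mulr1; rewrite subrr.
move=> y; apply/eqP; rewrite -subr_eq0; apply/eqP.
by move/psumr_eq0P: sum_gap => -> // z _; rewrite subr_ge0.
Qed.

Lemma stationary_vec_ge0_dichotomy w : (forall x, 0 <= w x) -> stationary_vec w ->
  (forall x, w x = 0) \/ (forall x, 0 < w x).
Proof.
move=> w_ge0 hw.
have [y /eqP wy0 | w_neq0] := pickP (fun x => w x == 0); last first.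
  by right=> x; rewrite lt0r w_neq0 w_ge0.
left=> x; apply/eqP; apply: (P_irr (Z := fun x => w x == 0) _ (y := y)); last exact/eqP.
move=> x' y' /eqP wy'0 Pxy.
move: (hw y'); rewrite wy'0 => /psumr_eq0P sum0.
have /eqP : w x' * P x' y' = 0 by apply: sum0 => // z _; apply: mulr_ge0.
by rewrite mulf_eq0 (gt_eqF Pxy) orbF.
Qed.

(* [|v| + v] and [|v| - v] are nonnegative stationary vectors whose product vanishes,
   so one of them is identically zero and v has a constant sign. *)
Lemma stationary_vec_sum0 v : stationary_vec v -> \sum_x v x = 0 -> forall x, v x = 0.
Proof.
move=> hv sum0 x.
have hn := stationary_vec_norm hv.
have norm_ge y : `|v y| + v y >= 0 /\ `|v y| - v y >= 0.
  by have := ler_norm (v y); have := ler_norm (- v y); rewrite normrN; split; lra.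
have [pos0|pos_gt0] := @stationary_vec_ge0_dichotomy (fun y => `|v y| + v y)
  (fun y => proj1 (norm_ge y)) (stationary_vecD hn hv).
  have v_le0 y : 0 <= - v y by have := pos0 y; have := norm_ge y; lra.
  have sumN0 : \sum_y - v y = 0 by rewrite sumrN sum0 oppr0.
  by apply/eqP; rewrite -oppr_eq0; apply/eqP; exact: psumr_eq0P (fun y _ => v_le0 y) sumN0 x isT.
have [neg0|neg_gt0] := @stationary_vec_ge0_dichotomy (fun y => `|v y| + - v y)
  (fun y => proj2 (norm_ge y)) (stationary_vecD hn (stationary_vecN hv)).
  have v_ge0 y : 0 <= v y by have := neg0 y; have := norm_ge y; lra.
  exact: psumr_eq0P (fun y _ => v_ge0 y) sum0 x isT.
have := pos_gt0 x; have := neg_gt0 x.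
by case: (lerP 0 (v x)) => [/ger0_norm|/ltr0_norm] ->; lra.
Qed.

Lemma stationary_distr_uniq (pi sigma : T -> R) :
  \sum_x pi x = 1 -> stationary_vec pi -> \sum_x sigma x = 1 -> stationary_vec sigma ->
  forall x, pi x = sigma x.
Proof.
move=> pi1 hpi sigma1 hsigma x; apply/eqP; rewrite -subr_eq0; apply/eqP.
apply: (stationary_vec_sum0 (stationary_vecD hpi (stationary_vecN hsigma))).
by rewrite sumrB pi1 sigma1 subrr.
Qed.

End StationaryUniqueness.

Lemma flipK (N : nat) (x : state N) i : flip (flip x i) i = x.
Proof. by apply/ffunP => j; rewrite !ffunE; case: eqP => [->|]; rewrite ?eqxx ?negbK. Qed.

Lemma flip_neq (N : nat) (x : state N) i : (x == flip x i) = false.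
Proof. by apply/negbTE/eqP => /ffunP /(_ i); rewrite ffunE eqxx; case: (x i). Qed.

Lemma flip_closed_full (N : nat) (Z : pred (state N)) :
  (forall y i, Z y -> Z (flip y i)) -> forall y x, Z y -> Z x.
Proof.
move=> Z_flip y x; move dist : #|[pred j | x j != y j]| => n.
elim: n y dist => [|n IH] y dist Zy.
  suff -> : x = y by [].
  apply/ffunP => j; apply/eqP/negPn/negP => neq_j.
  by move/card0_eq: dist => /(_ j); rewrite inE neq_j.
have [i /= neq_i|] := pickP [pred j | x j != y j]; last by move/eq_card0; rewrite dist.
apply: (IH (flip y i)); last exact: Z_flip.
move: dist; rewrite (cardD1 i) inE neq_i add1n => -[<-]; apply: eq_card => j.
rewrite !inE ffunE; case: (eqVneq j i) => [->|//].
by move: neq_i; case: (x i); case: (y i).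
Qed.

Section Chain.
Variables (R : realFieldType) (N : nat) (r0 r1 r2 r3 : R).
Hypotheses (r0_01 : 0 < r0 < 1) (r1_01 : 0 < r1 < 1) (r2_01 : 0 < r2 < 1)
  (r3_01 : 0 < r3 < 1).
Hypothesis N_gt0 : (0 < N)%N.

Local Notation rho := (rr r0 r1 r2 r3).
Local Notation P := (@trans R N r0 r1 r2 r3).

Lemma rr_01 m : 0 < rho m < 1.
Proof. by case: m => [|[|[|m]]]. Qed.

Lemma trans_summand_ge0 (x y : state N) i :
  0 <= (y == flip x i)%:R * (if x i then 1 - rho (mi x i) else rho (mi x i))
       + (y == x)%:R * (if x i then rho (mi x i) else 1 - rho (mi x i)).
Proof.
have := rr_01 (mi x i); set r := rho _ => r_01.
by apply: addr_ge0; apply: mulr_ge0 => //; case: (x i); lra.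
Qed.

Lemma trans_ge0 x y : 0 <= P x y.
Proof.
apply: mulr_ge0; first by rewrite invr_ge0.
by apply: sumr_ge0 => i _; apply: trans_summand_ge0.
Qed.

Lemma trans_row x : \sum_y P x y = 1.
Proof.
have sum_eq (a : state N) (c : R) : \sum_y (y == a)%:R * c = c.
  rewrite (bigD1 a) //= eqxx mul1r big1 ?addr0 // => y /negbTE ->.
  by rewrite mul0r.
rewrite /trans -mulr_sumr exchange_big /=.
under eq_bigr => i _ do rewrite big_split /= !sum_eq.
under eq_bigr => i _ do have -> : forall b (r : R),
  (if b then 1 - r else r) + (if b then r else 1 - r) = 1 by case=> r; ring.
by rewrite sumr_const card_ord mulVf // pnatr_eq0 -lt0n.
Qed.

Lemma trans_flip_gt0 y i : 0 < P (flip y i) y.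
Proof.
apply: mulr_gt0; first by rewrite invr_gt0 ltr0n (leq_ltn_trans _ (ltn_ord i)).
rewrite (bigD1 i) //=; set rest := \sum_(j | _) _.
have rest_ge0 : 0 <= rest by apply: sumr_ge0 => j _; apply: trans_summand_ge0.
rewrite flipK eqxx flip_neq mul0r addr0 mul1r.
have := rr_01 (mi (flip y i) i); set r := rho _ => r_01.
by case: (flip y i i); lra.
Qed.

Lemma trans_irreducible : irreducible P.
Proof.
move=> Z Z_pred; apply: flip_closed_full => y i Zy.
exact: Z_pred Zy (trans_flip_gt0 y i).
Qed.

Lemma statdist_stationary pi : stationary r0 r1 r2 r3 pi -> statdist N r0 r1 r2 r3 = pi.
Proof.
move=> hpi; apply: xget_unique => // sigma [_ [sigma1 hsigma]].
case: hpi => [_ [pi1 hpi]]; apply/ffunP => x.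
exact: (stationary_distr_uniq trans_ge0 trans_row trans_irreducible sigma1 hsigma pi1 hpi).
Qed.

End Chain.

Section Complement.
Variables (R : realFieldType) (N : nat) (r0 r1 r2 r3 : R).

Definition compl (x : state N) : state N := [ffun j => ~~ x j].

Lemma complK : involutive compl.
Proof. by move=> x; apply/ffunP => j; rewrite !ffunE negbK. Qed.

Lemma compl_inj : injective compl.
Proof. exact: inv_inj complK. Qed.

Lemma compl_flip x i : compl (flip x i) = flip (compl x) i.
Proof. by apply/ffunP => j; rewrite !ffunE; case: eqP. Qed.

Definition profit (s0 s1 s2 s3 : R) (x : state N) : R :=
  \sum_(i < N) (N%:R)^-1 * (rr s0 s1 s2 s3 (mi x i) - (1 - rr s0 s1 s2 s3 (mi x i))).

Lemma rr_compl x i :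
  rr (1 - r3) (1 - r2) (1 - r1) (1 - r0) (mi (compl x) i) = 1 - rr r0 r1 r2 r3 (mi x i).
Proof. by rewrite /mi !ffunE; case: (x (ord_pred i)); case: (x (ordS i)). Qed.

Lemma trans_compl x y :
  trans (1 - r3) (1 - r2) (1 - r1) (1 - r0) (compl x) (compl y) = trans r0 r1 r2 r3 x y.
Proof.
congr (_ * _); apply: eq_bigr => i _ /=.
rewrite rr_compl -compl_flip !(inj_eq compl_inj) ffunE.
by case: (x i) => /=; ring.
Qed.

Lemma profit_compl x :
  profit (1 - r3) (1 - r2) (1 - r1) (1 - r0) (compl x) = - profit r0 r1 r2 r3 x.
Proof.
rewrite /profit -sumrN; apply: eq_bigr => i _.
by rewrite rr_compl; ring.
Qed.

Definition compl_distr (pi : {ffun state N -> R}) : {ffun state N -> R} :=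
  [ffun y => pi (compl y)].

Lemma stationary_compl pi : stationary r0 r1 r2 r3 pi ->
  stationary (1 - r3) (1 - r2) (1 - r1) (1 - r0) (compl_distr pi).
Proof.
move=> [pi_ge0 [pi1 hpi]]; split; first by move=> x; rewrite ffunE.
split.
  by rewrite (reindex_inj compl_inj); under eq_bigr => x _ do rewrite ffunE complK.
move=> y; rewrite ffunE -hpi (reindex_inj compl_inj); apply: eq_bigr => x _.
by rewrite ffunE complK -trans_compl complK.
Qed.

End Complement.

Lemma mu_compl (R : realFieldType) (N : nat) (r0 r1 r2 r3 : R) : (0 < N)%N ->
  0 < r0 < 1 -> 0 < r1 < 1 -> 0 < r2 < 1 -> 0 < r3 < 1 ->
  mu N (1 - r3) (1 - r2) (1 - r1) (1 - r0) = - mu N r0 r1 r2 r3.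
Proof.
move=> N_gt0 r0_01 r1_01 r2_01 r3_01.
have c01 (r : R) : 0 < r < 1 -> 0 < 1 - r < 1 by lra.
have [[pi hpi]|no_pi] := pselect (exists pi, stationary (N:=N) r0 r1 r2 r3 pi).
  rewrite /mu (statdist_stationary r0_01 r1_01 r2_01 r3_01 N_gt0 hpi).
  rewrite (statdist_stationary (c01 _ r3_01) (c01 _ r2_01) (c01 _ r1_01) (c01 _ r0_01)
    N_gt0 (stationary_compl hpi)).
  rewrite (reindex_inj (@compl_inj N)) -sumrN; apply: eq_bigr => x _.
  by rewrite ffunE complK -mulrN -(profit_compl r0 r1 r2 r3).
have no_pi' : ~ exists sigma, stationary (N:=N) (1 - r3) (1 - r2) (1 - r1) (1 - r0) sigma.
  move=> [sigma /stationary_compl]; rewrite !subKr => hsigma.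
  by apply: no_pi; exists (compl_distr sigma).
rewrite /mu /statdist !xgetPN => [|pi hpi|sigma hsigma].
- by rewrite !big1 ?oppr0 // => x _; rewrite ffunE mul0r.
- by apply: no_pi; exists pi.
- by apply: no_pi'; exists sigma.
Qed.

Theorem theorem2 (R : realFieldType) (N : nat) (hN : (3 <= N)%N)
  (p0 p1 p3 : R)
  (hp0 : 0 < p0 < 1) (hp1 : 0 < p1 < 1) (hp3 : 0 < p3 < 1) :
  parrondo N p0 p1 p3 <-> anti_parrondo N (1 - p3) (1 - p1) (1 - p0).
Proof.
have N_gt0 : (0 < N)%N by apply: leq_trans hN.
have avg_01 (p : R) : 0 < p < 1 -> 0 < (2^-1 + p) / 2 < 1 by lra.
have avg_compl (p : R) : (2^-1 + (1 - p)) / 2 = 1 - (2^-1 + p) / 2 by field.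
have muB_compl : muB N (1 - p3) (1 - p1) (1 - p0) = - muB N p0 p1 p3.
  exact: mu_compl.
have muC_compl : muC N (1 - p3) (1 - p1) (1 - p0) = - muC N p0 p1 p3.
  by rewrite /muC !avg_compl mu_compl ?avg_01.
by rewrite /parrondo /anti_parrondo muB_compl muC_compl oppr_ge0 oppr_lt0.
Qed.
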